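(* Let $n\ge 1$ and let $L\ge 1$ be an integer together with an injective labelling $\ell\mapsto(p_\ell,q_\ell)$ of $\{0,\dots,L-1\}$ by pairs with $0\le p_\ell,q_\ell\le n-1$. Consider the Hilbert space $\mathbb{C}^2\otimes\mathbb{C}^{L}\otimes(\mathbb{C}^2)^{\otimes n}$ with computational basis states $\ket{v}\ket{l}\ket{j}$, where $v\in\{0,1\}$ (validation qubit), $l\in\{0,\dots,L-1\}$ (selection register) and $j\in\{0,1\}^n$ (Fock register). Say that $(l,j)$ is valid if, writing $(p,q)=(p_l,q_l)$ and $j=j_0j_1\cdots j_{n-1}$, either $p\neq q$, $j_q=1$ and $j_p=0$; or $p=q$ and $j_q=1$. For valid $(l,j)$ let $c(j,l)\in\{0,1\}^n$ be the bit string obtained from $j$ by swapping its $p$-th and $q$-th bits. Suppose that for each $i\in\{0,\dots,L-1\}$ we are given a linear operator $U_i$ acting on computational basis states by \[ U_i\ket{v}\ket{l}\ket{j}=\begin{cases}\ket{0}\ket{l}\ket{c(j,l)} & \text{if } i=l,\ v=1 \text{ and } (l,j)\text{ is valid},\\ \ket{v}\ket{l}\ket{j} & \text{otherwise.}\end{cases} \] Define $O_C=U_0U_1\cdots U_{L-1}\,(X\otimes I)$, where $X$ is the Pauli NOT gate on the validation qubit (so $X$ is applied first). Then for all $l\in\{0,\dots,L-1\}$ and $j\in\{0,1\}^n$, \[ O_C\ket{0}\ket{l}\ket{j}=\begin{cases}\ket{0}\ket{l}\ket{c(j,l)} & \text{if } (l,j)\text{ is valid},\\ \ket{1}\ket{l}\ket{j}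 & \text{otherwise.}\end{cases} \]
   Context: Bit strings $j\in\{0,1\}^n$ label occupation-number (Fock) basis states of $n$ fermionic modes; the pair $(p_l,q_l)$ corresponds to the operator $a^\dagger_{p}a_{q}$ of a pairing Hamiltonian, and validity of $(l,j)$ means $a^\dagger_p a_q\ket{j}\neq 0$, in which case $a^\dagger_p a_q$ maps $\ket{j}$ to $\ket{c(j,l)}$. *)

From HB Require Import structures.
From mathcomp Require Import all_boot all_order all_algebra all_fingroup all_field.
Set Implicit Arguments. Unset Strict Implicit. Unset Printing Implicit Defensive.
Import GRing.Theory Num.Theory.
Local Open Scope ring_scope.

(* Computational basis labels |v>|l>|j> : validation qubit, selection register, Fock register *)
Definition basis (L n : nat) : finType := (bool * 'I_L * {ffun 'I_n -> bool})%type.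

(* The Hilbert space C^2 (x) C^L (x) (C^2)^{(x) n}, as coordinate functions on the basis *)
Notation hspace L n := {ffun basis L n -> algC^o}.

Definition ket (L n : nat) (b : basis L n) : hspace L n :=
  [ffun b' => (b' == b)%:R].

Definition valid (L n : nat) (pq : 'I_L -> 'I_n * 'I_n) (l : 'I_L)
  (j : {ffun 'I_n -> bool}) : bool :=
  let p := (pq l).1 in let q := (pq l).2 in
  ((p != q) && j q && ~~ j p) || ((p == q) && j q).

Definition cswap (L n : nat) (pq : 'I_L -> 'I_n * 'I_n) (l : 'I_L)
  (j : {ffun 'I_n -> bool}) : {ffun 'I_n -> bool} :=
  [ffun k => j (tperm (pq l).1 (pq l).2 k)].

Definition Xval (L n : nat) (psi : hspace L n) : hspace L n :=
  [ffun b : basis L n => psi (~~ b.1.1, b.1.2, b.2)].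

Definition OC (L n : nat) (U : 'I_L -> hspace L n -> hspace L n)
  (psi : hspace L n) : hspace L n :=
  foldr (fun i w => U i w) (Xval psi) (enum 'I_L).

From HB Require Import structures.
From mathcomp Require Import all_boot all_order all_algebra all_fingroup all_field.
Import GRing.Theory Num.Theory.
Local Open Scope ring_scope.

(* X sets the validation qubit to 1.  Each U_i with i <> l leaves |1>|l>|j>
   untouched, and once U_l has fired (when (l, j) is valid) the qubit is back to
   0, a state no U_i acts on.  As U_l occurs exactly once in the product, O_C
   either performs the swap and clears the qubit, or leaves it set to 1. *)

Lemma Xval_ket (L n : nat) (v : bool) (l : 'I_L) (j : {ffun 'I_n -> bool}) :
  Xval (ket (v, l, j)) = ket (~~ v, l, j).
Proof.
apply/ffunP => -[[v' l'] j']; rewrite !ffunE /=.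
by case: v; case: v'.
Qed.

Section SelectOracles.

Variables (n L : nat) (pq : 'I_L -> 'I_n * 'I_n).
Variable U : 'I_L -> hspace L n -> hspace L n.
Hypothesis hU : forall (i : 'I_L) (v : bool) (l : 'I_L) (j : {ffun 'I_n -> bool}),
  U i (ket (v, l, j)) =
  if [&& i == l, v & valid pq l j] then ket (false, l, cswap pq l j)
  else ket (v, l, j).

Lemma U_ket_cleared (i l : 'I_L) (j : {ffun 'I_n -> bool}) :
  U i (ket (false, l, j)) = ket (false, l, j).
Proof. by rewrite hU andbF. Qed.

Lemma U_ket_neq (i l : 'I_L) (v : bool) (j : {ffun 'I_n -> bool}) :
  i != l -> U i (ket (v, l, j)) = ket (v, l, j).
Proof. by move=> /negbTE neq_il; rewrite hU neq_il. Qed.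

Lemma U_ket_set (l : 'I_L) (j : {ffun 'I_n -> bool}) :
  U l (ket (true, l, j)) =
  if valid pq l j then ket (false, l, cswap pq l j) else ket (true, l, j).
Proof. by rewrite hU eqxx. Qed.

Lemma foldr_U_ket_cleared (s : seq 'I_L) (l : 'I_L) (j : {ffun 'I_n -> bool}) :
  foldr U (ket (false, l, j)) s = ket (false, l, j).
Proof. by elim: s => //= i s ->; rewrite U_ket_cleared. Qed.

Lemma foldr_U_ket_notin (s : seq 'I_L) (l : 'I_L) (v : bool)
    (j : {ffun 'I_n -> bool}) :
  l \notin s -> foldr U (ket (v, l, j)) s = ket (v, l, j).
Proof.
elim: s => //= i s IH; rewrite in_cons negb_or => /andP[neq_li l_notin_s].
by rewrite IH // U_ket_neq // eq_sym.
Qed.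

Lemma foldr_U_ket_set (s : seq 'I_L) (l : 'I_L) (j : {ffun 'I_n -> bool}) :
  uniq s -> l \in s ->
  foldr U (ket (true, l, j)) s =
  if valid pq l j then ket (false, l, cswap pq l j) else ket (true, l, j).
Proof.
move=> uniq_s l_in_s; case/splitPr: l_in_s uniq_s => s1 s2.
rewrite cat_uniq /= negb_or => /and3P[_ /andP[l_notin_s1 _] /andP[l_notin_s2 _]].
rewrite foldr_cat /= foldr_U_ket_notin // U_ket_set.
by case: ifP => _; rewrite ?foldr_U_ket_cleared ?foldr_U_ket_notin.
Qed.

End SelectOracles.

Theorem theorem2 (n L : nat) (hn : (1 <= n)%N) (hL : (1 <= L)%N)
  (pq : 'I_L -> 'I_n * 'I_n) (pq_inj : injective pq)
  (U : 'I_L -> {linear hspace L n -> hspace L n})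
  (hU : forall (i : 'I_L) (v : bool) (l : 'I_L) (j : {ffun 'I_n -> bool}),
      U i (ket (v, l, j)) =
      if [&& i == l, v & valid pq l j] then ket (false, l, cswap pq l j)
      else ket (v, l, j)) :
  forall (l : 'I_L) (j : {ffun 'I_n -> bool}),
    OC (fun i => U i) (ket (false, l, j)) =
    if valid pq l j then ket (false, l, cswap pq l j) else ket (true, l, j).
Proof.
move=> l j; rewrite /OC Xval_ket.
exact: (@foldr_U_ket_set _ _ _ (fun i => U i) hU) (enum_uniq _) (mem_enum _ l).
Qed.
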